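(* For each $n \in \mathbb N$ and $q \in \{0,1,\dots,n-1\}$, $$\sum_{\mathbf m \in S_{n,q}} \pi_{\mathbf m} = \sum_{\substack{\mathbf k=(k_1,\dots,k_n)\in\{0,1,2,\dots\}^n\\ \sum_{j=1}^n j k_j = n,\ \sum_{j=1}^n k_j = n-q}} \frac{1}{k_1!\,k_2!\cdots k_n!\; 2^{k_2}\,3^{k_3}\cdots n^{k_n}}.$$
   Context: $S_{n,q} = \{\mathbf m=(m_1,\dots,m_{n-q}) \in \{0,1,2,\dots\}^{n-q} : m_1+\cdots+m_{n-q}=q\}$, and for $\mathbf m\in S_{n,q}$, $\pi_{\mathbf m} = \prod_{i=1}^{n-q}[m_i+m_{i+1}+\cdots+m_{n-q} + (n-q-i+1)]^{-1}$. *)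

From mathcomp Require Import all_boot all_order all_algebra.
Set Implicit Arguments. Unset Strict Implicit. Unset Printing Implicit Defensive.
Import Order.TTheory GRing.Theory Num.Theory.

(* S_{n,q}: m = (m_1,...,m_{n-q}) with m_i >= 0 and sum = q.  Index i : 'I_(n-q)
   stands for m_{i+1}.  Each m_i <= q is forced by the sum constraint, so
   taking values in 'I_q.+1 loses nothing. *)
Definition Snq (n q : nat) : {set {ffun 'I_(n - q) -> 'I_q.+1}} :=
  [set m : {ffun 'I_(n - q) -> 'I_q.+1} | \sum_(i < n - q) (m i : nat) == q].

(* pi_m = prod_{i=1}^{n-q} [m_i + ... + m_{n-q} + (n-q-i+1)]^{-1};
   with 0-based i0 = i-1 the factor is m_{i0} + ... + (n-q-i0). *)
Local Open Scope ring_scope.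
Definition pi_m (n q : nat) (m : {ffun 'I_(n - q) -> 'I_q.+1}) : rat :=
  \prod_(i < n - q)
     ((\sum_(j < n - q | (i <= j)%N) (m j : nat) + (n - q - i))%N%:R)^-1.

(* k = (k_1,...,k_n), index j : 'I_n stands for k_{j+1}; sum_j j k_j = n
   forces k_j <= n, so values in 'I_n.+1 lose nothing. *)
Definition Knq (n q : nat) : {set {ffun 'I_n -> 'I_n.+1}} :=
  [set k : {ffun 'I_n -> 'I_n.+1} | (\sum_(j < n) (j.+1 * k j) == n)%N && (\sum_(j < n) (k j : nat) == n - q)%N].

Definition wt (n : nat) (k : {ffun 'I_n -> 'I_n.+1}) : rat :=
  ((\prod_(j < n) ((k j)`! * j.+1 ^ (k j)))%N%:R)^-1.

(* Both sides of lemma5 equal c(n, n-q)/n!, the proportion of permutations of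
   n letters having exactly n-q cycles.  We introduce this proportion as
   [cyc_frac p m] through its recursion
       cyc_frac (p+1) m = m^{-1} * \sum_(i < m) cyc_frac p i
   (the cycle through the last letter leaves i letters behind).

   L B p s sums pi over the compositions of s into p parts.
   Splitting off the first part x, the first factor of pi is (s+p)^{-1} and the
   remaining factors are those of the tail, so
       L (p+1) s = (s+p+1)^{-1} * \sum_(x <= s) L p (s-x),
   and by induction L p s = cyc_frac p (p+s).

   F N m p sums wt over the cycle types k of size m with p cycles.
   As m = \sum_j (j+1) k_j and (j+1) k_j wt(k) = wt(k - e_j), removing one
   cycle of length j+1 gives  m * F m (p+1) = \sum_(j < m) F (m-j-1) p,  hence
   F m p = cyc_frac p m.  The theorem follows with p = n-q, s = q, m = n. *)
From mathcomp Require Import all_boot all_order all_algebra.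
From mathcomp Require Import zify ring.
Import GRing.Theory Num.Theory.
Set Implicit Arguments. Unset Strict Implicit.
Local Open Scope ring_scope.

(* cyc_frac p m = (number of permutations of m letters with p cycles) / m!. *)
Fixpoint cyc_frac (p m : nat) : rat :=
  match p with
  | 0 => ((m == 0)%N)%:R
  | p'.+1 => (m%:R)^-1 * \sum_(i < m) cyc_frac p' i
  end.

Lemma cyc_frac_small p m : (m < p)%N -> cyc_frac p m = 0.
Proof.
elim: p m => [//|p IH] m /= hm.
rewrite big1 ?mulr0 // => i _; apply: IH; exact: leq_trans (ltn_ord i) _.
Qed.

(* The recursion at size p+1+s, with the vanishing terms i < p dropped and
   the remaining ones indexed downwards by x = p+s-i. *)
Lemma cyc_frac_S_shift p s :
  cyc_frac p.+1 (p.+1 + s) =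
  ((s + p.+1)%N%:R)^-1 * \sum_(x < s.+1) cyc_frac p (p + (s - x)).
Proof.
rewrite /= [(p.+1 + s)%N]addnC; congr (_ * _).
rewrite -(big_mkord xpredT) (@big_cat_nat _ _ _ p) //=; last by lia.
rewrite big_nat big1 ?add0r; last by move=> i /andP[_ hi]; rewrite cyc_frac_small.
rewrite big_rev_mkord (_ : (s + p.+1 - p = s.+1)%N); last by lia.
by apply: eq_bigr => i _; have hi := ltn_ord i; congr (cyc_frac p _); lia.
Qed.

Lemma sum_ord_le B s (f : nat -> rat) : (s < B)%N ->
  \sum_(x < B | (x <= s)%N) f x = \sum_(x < s.+1) f x.
Proof.
move=> hs; have W := @big_ord_widen_cond rat 0 +%R s.+1 B xpredT f hs.
by rewrite /= in W; rewrite -W; apply: eq_bigl.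
Qed.

Definition fcons (T : Type) p (x : T) (g : {ffun 'I_p -> T}) : {ffun 'I_p.+1 -> T} :=
  [ffun i => if unlift ord0 i is Some j then g j else x].

Lemma fcons0 T p x (g : {ffun 'I_p -> T}) : fcons x g ord0 = x.
Proof. by rewrite ffunE unlift_none. Qed.

Lemma fconsS T p x (g : {ffun 'I_p -> T}) i : fcons x g (lift ord0 i) = g i.
Proof. by rewrite ffunE liftK. Qed.

Lemma sum_ffunS (R : nmodType) (T : finType) p (P : pred {ffun 'I_p.+1 -> T})
    (F : {ffun 'I_p.+1 -> T} -> R) :
  \sum_(f | P f) F f =
  \sum_(x : T) \sum_(g : {ffun 'I_p -> T} | P (fcons x g)) F (fcons x g).
Proof.
rewrite pair_big_dep /=.
rewrite (reindex (fun u : T * {ffun 'I_p -> T} => fcons u.1 u.2)) /=.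
  by apply: eq_bigl => u.
exists (fun f => (f ord0, [ffun i => f (lift ord0 i)])) => [[x g] _ | f _] /=.
  by rewrite fcons0; congr pair; apply/ffunP => i; rewrite ffunE fconsS.
apply/ffunP => i; rewrite ffunE.
by case: unliftP => [j ->|->]; rewrite ?ffunE.
Qed.

Definition pi_comp B p (g : {ffun 'I_p -> 'I_B}) : rat :=
  \prod_(i < p) ((\sum_(j < p | (i <= j)%N) (g j : nat) + (p - i))%N%:R)^-1.

Definition L B p s : rat :=
  \sum_(g : {ffun 'I_p -> 'I_B} | (\sum_(i < p) (g i : nat) == s)%N) pi_comp g.

Lemma sum_fcons B p (x : 'I_B) g :
  (\sum_(i < p.+1) (fcons x g i : nat) = x + \sum_(i < p) (g i : nat))%N.
Proof.
by rewrite big_ord_recl fcons0; congr addn; apply: eq_bigr => i _; rewrite fconsS.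
Qed.

Lemma pi_comp_fcons B p (x : 'I_B) g :
  pi_comp (fcons x g) = ((x + \sum_(i < p) (g i : nat) + p.+1)%N%:R)^-1 * pi_comp g.
Proof.
rewrite /pi_comp big_ord_recl; congr (_ * _); first by rewrite subn0 -sum_fcons.
apply: eq_bigr => i _; congr ((_ %:R)^-1).
rewrite /= /bump leq0n add1n subSS; congr addn.
rewrite big_mkcond big_ord_recl /= add0n [RHS]big_mkcond.
by apply: eq_bigr => j _; rewrite /= /bump leq0n add1n ltnS fconsS.
Qed.

Lemma L_step B p s :
  L B p.+1 s = ((s + p.+1)%N%:R)^-1 * \sum_(x < B | (x <= s)%N) L B p (s - x)%N.
Proof.
rewrite /L sum_ffunS mulr_sumr [RHS]big_mkcond /=; apply: eq_bigr => x _.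
rewrite (eq_bigl (fun g : {ffun 'I_p -> 'I_B} =>
          (x <= s)%N && (\sum_(i < p) (g i : nat) == s - x)%N)); last first.
  move=> g /=; rewrite sum_fcons.
  case: leqP => hx /=; first by apply/eqP/eqP => h; lia.
  by apply/eqP => h; lia.
case: leqP => hx /=; last by rewrite big_pred0.
rewrite mulr_sumr; apply: eq_bigr => g /eqP hg.
by rewrite pi_comp_fcons hg subnKC.
Qed.

Lemma L_cyc_frac B p s : (s < B)%N -> L B p s = cyc_frac p (p + s).
Proof.
elim: p s => [|p IH] s hs.
  rewrite /L /= add0n.
  rewrite (eq_bigl (fun _ => s == 0%N)) => [|g]; last by rewrite big_ord0 eq_sym.
  case: s hs => [|s] hs /=; last by rewrite big_pred0.
  rewrite (eq_bigr (fun _ => 1)) => [|g _]; last by rewrite /pi_comp big_ord0.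
  by rewrite sumr_const card_ffun !card_ord expn0.
rewrite L_step cyc_frac_S_shift (@sum_ord_le B s (fun x => L B p (s - x)%N)) //.
congr (_ * _).
by apply: eq_bigr => x _; rewrite IH //; exact: leq_ltn_trans (leq_subr _ _) hs.
Qed.

Section CycleTypes.
Variable N : nat.
Implicit Types (k : {ffun 'I_N -> 'I_N.+1}) (j : 'I_N).

Definition Kset m p := [set k : {ffun 'I_N -> 'I_N.+1} |
  (\sum_(j < N) (j.+1 * k j) == m)%N && (\sum_(j < N) (k j : nat) == p)%N].
Definition F m p : rat := \sum_(k in Kset m p) wt k.

Lemma Kset_term_bound m p k j : k \in Kset m p -> (j.+1 * k j <= m)%N.
Proof.
by rewrite inE => /andP[/eqP <- _]; rewrite (bigD1 j) //= leq_addr.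
Qed.

Definition incf j k : {ffun 'I_N -> 'I_N.+1} :=
  [ffun i => if i == j then inord (k i).+1 else k i].
Definition decf j k : {ffun 'I_N -> 'I_N.+1} :=
  [ffun i => if i == j then inord (k i).-1 else k i].

Lemma decf_j j k : (decf j k j : nat) = (k j).-1.
Proof. rewrite ffunE eqxx inordK //; have := ltn_ord (k j); lia. Qed.
Lemma incf_j j k : (incf j k j : nat) = if (k j < N)%N then (k j).+1 else 0%N.
Proof. by rewrite ffunE eqxx /inord val_insubd ltnS. Qed.
Lemma decf_i j k i : i != j -> decf j k i = k i.
Proof. by rewrite ffunE => /negbTE ->. Qed.
Lemma incf_i j k i : i != j -> incf j k i = k i.
Proof. by rewrite ffunE => /negbTE ->. Qed.

Lemma decf_incf j k : (k j < N)%N -> decf j (incf j k) = k.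
Proof.
move=> h; apply/ffunP => i; apply: val_inj.
case: (eqVneq i j) => [->|hij]; last by rewrite decf_i // incf_i.
by rewrite /= decf_j incf_j h.
Qed.

Lemma incf_decf j k : (0 < k j)%N -> incf j (decf j k) = k.
Proof.
move=> hk; apply/ffunP => i; apply: val_inj.
case: (eqVneq i j) => [->|hij]; last by rewrite incf_i // decf_i.
have := ltn_ord (k j); rewrite /= incf_j decf_j => h; rewrite ifT; lia.
Qed.

Lemma wt_decf j k : (0 < k j)%N -> ((j.+1 * k j)%N)%:R * wt k = wt (decf j k).
Proof.
move=> hk; rewrite /wt (bigD1 j) //= [in RHS](bigD1 j) //= decf_j.
under [in RHS]eq_bigr => i hi do rewrite decf_i //.
set R := (\prod_(i < N | i != j) _)%N.
have [c ->] : exists c, (k j : nat) = c.+1 by exists (k j).-1; lia.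
rewrite /= factS expnS.
have -> : (c.+1 * c`! * (j.+1 * j.+1 ^ c) * R = (j.+1 * c.+1) * (c`! * j.+1 ^ c * R))%N
  by ring.
by rewrite [in X in _ * X = _]natrM invfM mulrA mulfV ?mul1r // pnatr_eq0 muln_eq0.
Qed.

Lemma sum_update (f g : 'I_N -> nat) j : (forall i, i != j -> f i = g i) ->
  (\sum_(i < N) f i + g j = \sum_(i < N) g i + f j)%N.
Proof.
move=> h; rewrite (bigD1 j) //= [in RHS](bigD1 j) //= (eq_bigr g) => [|i /h //].
lia.
Qed.

Lemma Kset_incf m p j k : (j < m)%N -> (k j < N)%N ->
  (incf j k \in Kset m p.+1) = (k \in Kset (m - j.+1)%N p).
Proof.
move=> hjm h; rewrite !inE.
have incf_jS : incf j k j = (k j).+1 :> nat by rewrite incf_j h.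
have hA : (\sum_(i < N) i.+1 * incf j k i + j.+1 * k j =
           \sum_(i < N) i.+1 * k i + j.+1 * (k j).+1)%N.
  by rewrite -incf_jS; apply: sum_update => i hi; rewrite incf_i.
have hB : (\sum_(i < N) incf j k i + k j = \sum_(i < N) k i + (k j).+1)%N.
  by rewrite -incf_jS; apply: sum_update => i hi; rewrite incf_i.
rewrite mulnS in hA.
by apply/andP/andP => [[/eqP e1 /eqP e2] | [/eqP e1 /eqP e2]]; split; apply/eqP; lia.
Qed.

Lemma F_weighted_count m p j : (m <= N)%N ->
  \sum_(k in Kset m p.+1) ((j.+1 * k j)%N)%:R * wt k =
  if (j < m)%N then F (m - j.+1)%N p else 0.
Proof.
move=> hmN; rewrite (bigID (fun k => 0 < k j)%N) /= [X in _ + X]big1 ?addr0; last first.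
  by move=> k /andP[_]; rewrite lt0n negbK => /eqP ->; rewrite muln0 mul0r.
rewrite (eq_bigr (fun k => wt (decf j k))) => [|k /andP[_ hk]]; last by rewrite wt_decf.
case: ltnP => hjm; last first.
  rewrite big_pred0 // => k; apply/negP => /andP[/(Kset_term_bound j) hk kj].
  have : (j.+1 <= j.+1 * k j)%N by rewrite leq_pmulr.
  lia.
rewrite (reindex_onto (incf j) (decf j)) /=; last by move=> k /andP[_]; exact: incf_decf.
rewrite /F; apply: eq_big => k; last by move=> /andP[_ /eqP ->].
case: (ltnP (k j) N) => h.
  by rewrite decf_incf // eqxx andbT incf_j h /= andbT Kset_incf.
rewrite incf_j ifF ?andbF; last by apply/negbTE; rewrite -leqNgt.
apply/esym/negP => /(Kset_term_bound j) hk.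
have : (k j <= j.+1 * k j)%N by rewrite leq_pmull.
lia.
Qed.

Lemma F_step m p : (m <= N)%N ->
  m%:R * F m p.+1 = \sum_(j < N | (j < m)%N) F (m - j.+1)%N p.
Proof.
move=> hmN; rewrite /F mulr_sumr.
rewrite (eq_bigr (fun k => \sum_(j < N) ((j.+1 * k j)%N)%:R * wt k)); last first.
  by move=> k; rewrite inE => /andP[/eqP <- _]; rewrite natr_sum mulr_suml.
rewrite exchange_big /= [RHS]big_mkcond /=; apply: eq_bigr => j _.
by rewrite F_weighted_count.
Qed.

Lemma F_0cycles m : F m 0 = ((m == 0)%N)%:R.
Proof.
pose k0 : {ffun 'I_N -> 'I_N.+1} := [ffun => ord0].
rewrite /F (eq_bigl (fun k => (k == k0) && (m == 0)%N)); last first.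
  move=> k; rewrite inE; case: (eqVneq k k0) => [->|hk].
    rewrite !big1 ?eqxx ?andbT 1?eq_sym // => i _; rewrite ffunE //.
    exact: muln0.
  rewrite sum_nat_eq0 /=; apply/negbTE/negP => /andP[_ /forallP h].
  by move/eqP: hk; apply; apply/ffunP => i; apply: val_inj; rewrite ffunE /=; apply/eqP; exact: h.
case: m => [|m]; last by rewrite big_pred0 // => k; rewrite andbF.
rewrite (big_pred1 k0) => [|k]; last by rewrite andbT.
by rewrite /wt big1 // => i _; rewrite ffunE.
Qed.

Lemma F_size0 p : F 0 p.+1 = 0.
Proof.
rewrite /F big1 // => k; rewrite inE => /andP[/eqP h1 /eqP h2].
have : (\sum_(j < N) (k j : nat) <= \sum_(j < N) (j.+1 * k j))%N.
  by apply: leq_sum => i _; rewrite leq_pmull.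
by rewrite h1 h2.
Qed.

Lemma F_cyc_frac m p : (m <= N)%N -> F m p = cyc_frac p m.
Proof.
elim: p m => [|p IH] m hm; first by rewrite F_0cycles.
case: m hm => [|m] hm; first by rewrite F_size0 /= big_ord0 mulr0.
have nz : (m.+1%:R : rat) != 0 by rewrite pnatr_eq0.
apply: (mulfI nz); rewrite /= F_step // mulrA mulfV // mul1r.
rewrite (@sum_ord_le N m (fun x : nat => F (m.+1 - x.+1)%N p)) //.
rewrite -(big_mkord xpredT) big_rev_mkord subn0.
by apply: eq_bigr => i _; apply: IH; lia.
Qed.

End CycleTypes.

Theorem lemma5 (n q : nat) : (q < n)%N ->
  \sum_(m in Snq n q) pi_m m = \sum_(k in Knq n q) wt k.
Proof.
move=> hq.
have -> : \sum_(m in Snq n q) pi_m m = L q.+1 (n - q) q.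
  by apply: eq_bigl => m; rewrite inE.
have -> : \sum_(k in Knq n q) wt k = F n n (n - q)%N by [].
by rewrite L_cyc_frac // F_cyc_frac // subnK // ltnW.
Qed.
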